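(* Let $G$ be a NOI-graph or a COI-graph on $n$ vertices. Then to each connected component $C_k$ of $G$ (isolated vertices included) corresponds a vector $\mathbf{v}_k\in\{-1,0,1\}^n$, supported on the vertex set of $C_k$, such that the vectors $\{\mathbf{v}_k\}$ form a basis of the kernel of the hybrid Laplacian $\mathcal{L}(G)$.
   Context: A hybrid graph $G=(V,E_L+E_Q)$ has a set $E_L$ of $L$-edges and a set $E_Q$ of $Q$-edges. Its hybrid Laplacian is $\mathcal{L}(G)=L(S_l)+Q(S_q)$ with $S_l=(V,E_L)$, $S_q=(V,E_Q)$, $L=D-A$ the signed Laplacian and $Q=D+A$ the signless Laplacian. Connected components are taken in the graph with all edges of both types. $G$ is a NOI-graph if $S_q$ is bipartite and no vertex is incident to both a $Q$-edge and an $L$-edge. $G$ is a COI-graph if $S_q$ is bipartite with a bipartition $(P_1,P_2)$ of $V$ (every $Q$-edge joining $P_1$ to $P_2$) such that every $L$-edge joins two vertices in the same part. *)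

From HB Require Import structures.
From mathcomp Require Import all_boot all_order all_algebra.
Set Implicit Arguments. Unset Strict Implicit. Unset Printing Implicit Defensive.
Import Order.TTheory GRing.Theory Num.Theory.
Local Open Scope ring_scope.

Definition simple_rel (n : nat) (e : rel 'I_n) : Prop :=
  (forall x y, e x y = e y x) /\ (forall x, ~~ e x x).

Definition deg (n : nat) (e : rel 'I_n) (i : 'I_n) : nat := #|[set j | e i j]|.

(* Hybrid Laplacian L(S_l) + Q(S_q):
   diagonal = deg_L + deg_Q, off-diagonal = [Q-edge] - [L-edge]. *)
Definition hybrid_laplacian (R : nzRingType) (n : nat) (eL eQ : rel 'I_n) : 'M[R]_n :=
  \matrix_(i, j)
    if i == j then ((deg eL i)%:R + (deg eQ i)%:R)
    else ((eQ i j)%:R - (eL i j)%:R).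

Definition hyb_adj (n : nat) (eL eQ : rel 'I_n) : rel 'I_n :=
  fun x y => eL x y || eQ x y.

Definition components (n : nat) (eL eQ : rel 'I_n) : {set {set 'I_n}} :=
  [set [set y | connect (hyb_adj eL eQ) x y] | x : 'I_n].

Definition bipartite_by (n : nat) (e : rel 'I_n) (part : 'I_n -> bool) : Prop :=
  forall x y, e x y -> part x != part y.

Definition NOI_graph (n : nat) (eL eQ : rel 'I_n) : Prop :=
  (exists part, bipartite_by eQ part) /\
  (forall x : 'I_n, ~ ((exists y, eL x y) /\ (exists y, eQ x y))).

Definition COI_graph (n : nat) (eL eQ : rel 'I_n) : Prop :=
  exists part : 'I_n -> bool,
    bipartite_by eQ part /\ (forall x y, eL x y -> part x = part y).

Definition is_kernel_basis (R : fieldType) (n : nat) (M : 'M[R]_n)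
    (I : {set {set 'I_n}}) (v : {set 'I_n} -> 'cV[R]_n) : Prop :=
  [/\ forall C, C \in I -> M *m v C = 0,
      (forall c : {set 'I_n} -> R,
          \sum_(C in I) c C *: v C = 0 -> forall C, C \in I -> c C = 0) &
      (forall u : 'cV[R]_n, M *m u = 0 ->
          exists c : {set 'I_n} -> R, u = \sum_(C in I) c C *: v C)].

From HB Require Import structures.
From mathcomp Require Import all_boot all_order all_algebra.
From mathcomp Require Import ring.
Set Implicit Arguments. Unset Strict Implicit. Unset Printing Implicit Defensive.
Import Order.TTheory GRing.Theory Num.Theory.
Local Open Scope ring_scope.

(* Both kinds of graph admit a signing s : V -> {1, -1} that is constant along
   L-edges and changes sign along Q-edges (for a NOI-graph, move every vertex
   without Q-edges to one side of the bipartition of S_q).  Twice the quadratic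
   form of the hybrid Laplacian is the sum of (u_i - u_j)^2 over L-edges and of
   (u_i + u_j)^2 over Q-edges, so u lies in the kernel iff u_i = u_j on L-edges
   and u_i = - u_j on Q-edges.  Then s u is constant on every connected
   component, and the kernel is freely spanned by the restrictions of s to the
   components. *)

Section Components.

Variables (T : finType) (e : rel T).
Hypothesis e_sym : connect_sym e.

Definition component (x : T) : {set T} := [set y | connect e x y].

Lemma component_refl x : x \in component x.
Proof. by rewrite inE. Qed.

Lemma component_eq x y : y \in component x -> component y = component x.
Proof.
by rewrite inE => xy; apply/setP => z; rewrite !inE (same_connect e_sym xy).
Qed.

Lemma component_closed x : closed e (component x).
Proof. by move=> y z yz; rewrite !inE; apply: connect_closed. Qed.

Lemma component_const (V : eqType) (f : T -> V) :
  (forall x y, e x y -> f x = f y) -> forall x y, y \in component x -> f y = f x.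
Proof.
move=> fe x y; rewrite inE => xy; apply/eqP.
have cl : closed e [pred z | f z == f x] by move=> z t /fe; rewrite !inE /= => ->.
by have := closed_connect cl xy; rewrite !inE /= eqxx => <-.
Qed.

Lemma sum_components_at (V : nmodType) (F : {set T} -> V) x :
  \sum_(C in [set component y | y : T]) (if x \in C then F C else 0) =
  F (component x).
Proof.
rewrite (bigD1 (component x)) ?imset_f //= component_refl big1 ?addr0 //.
move=> _ /andP[/imsetP[y _ ->] neq]; case: ifP => // /component_eq xy.
by rewrite xy eqxx in neq.
Qed.

End Components.

Definition hyb_balanced (R : zmodType) (n : nat) (eL eQ : rel 'I_n)
    (f : 'I_n -> R) :=
  (forall i j, eL i j -> f i = f j) /\ (forall i j, eQ i j -> f i = - f j).

Lemma natr_deg (R : nzSemiRingType) (n : nat) (e : rel 'I_n) i :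
  (deg e i)%:R = \sum_j (e i j)%:R :> R.
Proof.
rewrite /deg -sum1_card natr_sum big_mkcond /=; apply: eq_bigr => j _.
by rewrite inE; case: (e i j).
Qed.

Section HybridLaplacian.

Variables (R : realDomainType) (n : nat) (eL eQ : rel 'I_n).
Hypotheses (eL_simple : simple_rel eL) (eQ_simple : simple_rel eQ).
Local Notation M := (hybrid_laplacian R eL eQ).

Lemma hybrid_laplacian_mulmx (u : 'cV[R]_n) i :
  (M *m u) i 0 =
  \sum_j ((eL i j)%:R * (u i 0 - u j 0) + (eQ i j)%:R * (u i 0 + u j 0)).
Proof.
have [[_ irrL] [_ irrQ]] := (eL_simple, eQ_simple).
have M_split j : M i j = (i == j)%:R * ((deg eL i)%:R + (deg eQ i)%:R)
                         + ((eQ i j)%:R - (eL i j)%:R).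
  rewrite mxE; case: eqP => [<-|_]; last by rewrite mul0r add0r.
  by rewrite (negbTE (irrL i)) (negbTE (irrQ i)) subrr mul1r addr0.
rewrite mxE; under eq_bigr => j _ do rewrite M_split mulrDl.
rewrite big_split /=.
rewrite (bigD1 i) //= eqxx mul1r big1 ?addr0; last first.
  by move=> j; rewrite eq_sym => /negbTE ->; rewrite !mul0r.
rewrite !natr_deg mulrDl !mulr_suml -!big_split /=; apply: eq_bigr => j _; ring.
Qed.

Lemma hybrid_laplacian_form (u : 'cV[R]_n) :
  (\sum_i u i 0 * (M *m u) i 0) *+ 2 =
  \sum_i \sum_j ((eL i j)%:R * (u i 0 - u j 0) ^+ 2
                 + (eQ i j)%:R * (u i 0 + u j 0) ^+ 2).
Proof.
have [[symL _] [symQ _]] := (eL_simple, eQ_simple).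
pose G i j := (eL i j)%:R * (u i 0 ^+ 2 - u i 0 * u j 0)
              + (eQ i j)%:R * (u i 0 ^+ 2 + u i 0 * u j 0) : R.
have -> : \sum_i u i 0 * (M *m u) i 0 = \sum_i \sum_j G i j.
  apply: eq_bigr => i _; rewrite hybrid_laplacian_mulmx mulr_sumr.
  by apply: eq_bigr => j _; rewrite /G; ring.
rewrite mulr2n [X in _ + X]exchange_big -big_split /=; apply: eq_bigr => i _.
rewrite -big_split /=; apply: eq_bigr => j _.
by rewrite /G (symL j) (symQ j); ring.
Qed.

Lemma hybrid_laplacian_kerP (u : 'cV[R]_n) :
  M *m u = 0 <-> hyb_balanced eL eQ (fun i => u i 0).
Proof.
split=> [Mu0 | [uL uQ]]; last first.
  apply/matrixP => i k; rewrite ord1 hybrid_laplacian_mulmx mxE big1 // => j _.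
  have -> : (eL i j)%:R * (u i 0 - u j 0) = 0.
    by case eij: (eL i j); rewrite ?mul0r // (uL i j eij) subrr mulr0.
  have -> : (eQ i j)%:R * (u i 0 + u j 0) = 0.
    by case qij: (eQ i j); rewrite ?mul0r // (uQ i j qij) addNr mulr0.
  by rewrite addr0.
pose FL i j := (eL i j)%:R * (u i 0 - u j 0) ^+ 2 : R.
pose FQ i j := (eQ i j)%:R * (u i 0 + u j 0) ^+ 2 : R.
have FL_ge0 i j : 0 <= FL i j by rewrite mulr_ge0 ?sqr_ge0.
have FQ_ge0 i j : 0 <= FQ i j by rewrite mulr_ge0 ?sqr_ge0.
have F_eq0 i j : (FL i j == 0) && (FQ i j == 0).
  rewrite -paddr_eq0 //; have /eqP : \sum_i \sum_j (FL i j + FQ i j) = 0.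
    rewrite -hybrid_laplacian_form Mu0 big1 ?mul0rn // => k _.
    by rewrite mxE mulr0.
  rewrite psumr_eq0 => [/allP/(_ i (mem_index_enum _))|k _]; last first.
    by rewrite sumr_ge0 // => l _; rewrite addr_ge0.
  rewrite /= psumr_eq0 => [/allP/(_ j (mem_index_enum _)) //|l _].
  exact: addr_ge0.
split=> i j eij; have /andP[] := F_eq0 i j.
  by rewrite /FL eij mul1r sqrf_eq0 subr_eq0 => /eqP.
by rewrite /FQ eij mul1r sqrf_eq0 addr_eq0 => _ /eqP.
Qed.

End HybridLaplacian.

Section HybridGraphs.

Variables (n : nat) (eL eQ : rel 'I_n).
Hypotheses (eL_simple : simple_rel eL) (eQ_simple : simple_rel eQ).

Lemma hyb_adj_connect_sym : connect_sym (hyb_adj eL eQ).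
Proof.
have [[symL _] [symQ _]] := (eL_simple, eQ_simple).
by apply: sym_connect_sym => x y; rewrite /hyb_adj symL symQ.
Qed.

Lemma NOI_COI : NOI_graph eL eQ -> COI_graph eL eQ.
Proof.
have [[symL _] [symQ _]] := (eL_simple, eQ_simple).
move=> [[part part_bip] L_no_Q].
have noQ x y : eL x y -> ~~ [exists z, eQ x z].
  move=> xy; apply/existsP => -[z xz].
  by apply: (L_no_Q x); split; [exists y | exists z].
exists (fun x => if [exists y, eQ x y] then part x else true); split.
  move=> x y xy; have yx : eQ y x by rewrite symQ.
  have [x_Q y_Q] : [exists z, eQ x z] /\ [exists z, eQ y z].
    by split; apply/existsP; [exists y | exists x].
  by rewrite x_Q y_Q part_bip.
by move=> x y xy; rewrite (negbTE (noQ x y xy)) (negbTE (noQ y x _)) // symL.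
Qed.

Lemma COI_sign (R : nzRingType) :
  COI_graph eL eQ ->
  exists s : 'I_n -> R, hyb_balanced eL eQ s /\ forall i, s i ^+ 2 = 1.
Proof.
move=> [part [part_bip part_L]].
exists (fun i => if part i then 1 else -1); split=> [|i]; last first.
  by case: (part i); rewrite ?expr1n ?sqrrN ?expr1n.
split=> i j ij; first by rewrite (part_L i j ij).
by move: (part_bip i j ij); case: (part i); case: (part j); rewrite ?opprK.
Qed.

End HybridGraphs.

Lemma hyb_balanced_mul (R : nzRingType) (n : nat) (eL eQ : rel 'I_n)
    (f g : 'I_n -> R) :
  hyb_balanced eL eQ f -> hyb_balanced eL eQ g ->
  forall x y, hyb_adj eL eQ x y -> f x * g x = f y * g y.
Proof.
move=> [fL fQ] [gL gQ] x y /orP[xy|xy]; first by rewrite (fL x y) ?(gL x y).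
by rewrite (fQ x y) ?(gQ x y) ?mulrNN.
Qed.

Section ComponentVectors.

Variables (R : realFieldType) (n : nat) (eL eQ : rel 'I_n).
Hypotheses (eL_simple : simple_rel eL) (eQ_simple : simple_rel eQ).
Variable s : 'I_n -> R.
Hypotheses (s_balanced : hyb_balanced eL eQ s) (s_sign : forall i, s i ^+ 2 = 1).

Local Notation M := (hybrid_laplacian R eL eQ).
Local Notation comps := (components eL eQ).

Definition component_vector (C : {set 'I_n}) : 'cV[R]_n :=
  \col_i (if i \in C then s i else 0).

Lemma component_vector_entry C i : component_vector C i 0 \in [:: -1; 0; 1].
Proof.
have /eqP := s_sign i; rewrite sqrf_eq1 mxE.
case: ifP => _; last by rewrite !inE eqxx orbT.
by case/orP=> /eqP ->; rewrite !inE eqxx ?orbT.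
Qed.

Lemma component_vector_support C i : component_vector C i 0 != 0 -> i \in C.
Proof. by rewrite mxE; case: ifP; rewrite ?eqxx. Qed.

Lemma component_vector_ker C : C \in comps -> M *m component_vector C = 0.
Proof.
case/imsetP=> x _ ->.
have cl := component_closed (hyb_adj_connect_sym eL_simple eQ_simple) x.
have [sL sQ] := s_balanced; apply/hybrid_laplacian_kerP => //.
split=> i j ij; rewrite !mxE (cl i j) /hyb_adj ?ij ?orbT //.
  by rewrite (sL i j ij).
by case: ifP => _; rewrite ?oppr0 // (sQ i j ij).
Qed.

Lemma component_vector_sum_at (c : {set 'I_n} -> R) i :
  (\sum_(C in comps) c C *: component_vector C) i 0 =
  c (component (hyb_adj eL eQ) i) * s i.
Proof.
have e_sym := hyb_adj_connect_sym eL_simple eQ_simple.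
rewrite summxE -(sum_components_at e_sym (fun C => c C * s i)).
by apply: eq_bigr => C _; rewrite !mxE; case: ifP; rewrite ?mulr0.
Qed.

Lemma component_vectors_free (c : {set 'I_n} -> R) :
  \sum_(C in comps) c C *: component_vector C = 0 ->
  forall C, C \in comps -> c C = 0.
Proof.
move=> c0 _ /imsetP[x _ ->].
move/matrixP/(_ x 0): c0; rewrite component_vector_sum_at mxE => /eqP.
rewrite mulf_eq0 => /orP[/eqP cx0 | /eqP sx0]; first exact: cx0.
by have := s_sign x; rewrite sx0 expr0n => /eqP; rewrite eq_sym oner_eq0.
Qed.

Lemma component_vectors_span (u : 'cV[R]_n) :
  M *m u = 0 -> exists c, u = \sum_(C in comps) c C *: component_vector C.
Proof.
move/hybrid_laplacian_kerP => /(_ eL_simple eQ_simple) u_balanced.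
exists (fun C : {set 'I_n} => if [pick x in C] is Some x then s x * u x 0 else 0).
apply/matrixP => i k; rewrite ord1 component_vector_sum_at.
case: pickP => [x xi|/(_ i)]; last by rewrite component_refl.
rewrite (component_const (hyb_balanced_mul s_balanced u_balanced) xi).
by rewrite mulrC mulrA -expr2 s_sign mul1r.
Qed.

Lemma component_vectors_basis : is_kernel_basis M comps component_vector.
Proof.
split; [exact: component_vector_ker | exact: component_vectors_free |].
exact: component_vectors_span.
Qed.

End ComponentVectors.

Theorem lemmaD1 (R : realFieldType) (n : nat) (eL eQ : rel 'I_n) :
  simple_rel eL -> simple_rel eQ ->
  NOI_graph eL eQ \/ COI_graph eL eQ ->
  exists v : {set 'I_n} -> 'cV[R]_n,
    [/\ forall C, C \in components eL eQ ->
          forall i, v C i 0 \in [:: -1; 0; 1],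
        forall C, C \in components eL eQ ->
          forall i, v C i 0 != 0 -> i \in C &
        is_kernel_basis (hybrid_laplacian R eL eQ) (components eL eQ) v].
Proof.
move=> eL_simple eQ_simple NOI_or_COI.
have COI : COI_graph eL eQ by case: NOI_or_COI => //; apply: NOI_COI.
have [s [s_balanced s_sign]] := COI_sign R COI.
exists (component_vector s); split=> [C _ i | C _ i |].
- exact: component_vector_entry.
- exact: component_vector_support.
- exact: component_vectors_basis.
Qed.
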